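(* Let $\prec$ be the lexicographic term order on $K[\mathbf T_{\lambda-\mu}]$ induced by the variable order $T_{rc}>T_{r'c'}$ if and only if $r<r'$, or $r=r'$ and $c<c'$. Then: (a) the 2-minors of $\mathbf T_{\lambda-\mu}$ form a Gröbner basis of $I_2(\mathbf T_{\lambda-\mu})$ with respect to $\prec$; (b) the 2-minors of $\mathbf S_{\lambda-\mu}$ form a Gröbner basis of $I_2(\mathbf S_{\lambda-\mu})$ with respect to $\prec$.
   Context: Let $K$ be a field. Fix an integer $n\ge1$, a partition $\lambda=(\lambda_1,\dots,\lambda_n)$ of positive integers with $m:=\lambda_1\ge\lambda_2\ge\cdots\ge\lambda_n$, and an integer vector $\mu=(\mu_1,\dots,\mu_n)$ with $0\le\mu_1\le\cdots\le\mu_n<\lambda_n$ and $\mu_i\ge i-1$ for all $i$. The tableau $\mathbf T_{\lambda-\mu}$ is the set of positions $\{(i,j):1\le i\le n,\ \mu_i<j\le\lambda_i\}$ in an $m\times m$ array, and $K[\mathbf T_{\lambda-\mu}]$ is the polynomial ring over $K$ in the variables $T_{ij}$, $(i,j)\in\mathbf T_{\lambda-\mu}$; the entry of $\mathbf T_{\lambda-\mu}$ at $(i,j)$ is $T_{ij}$. The symmetrized tableau $\mathbf S_{\lambda-\mu}$ is the partially filled $m\times m$ array with set of positions $\{(i,j):(i,j)\in\mathbf T_{\lambda-\mu}\text{ or }(j,i)\in\mathbf T_{\lambda-\mu}\}$, whose entry at $(i,j)$ is $T_{ij}$ if $(i,j)\in\mathbf T_{\lambda-\mu}$ and $T_{ji}$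 otherwise (this is well defined; $\mathbf S_{\lambda-\mu}$ may have holes). For such an array $A$ with set of positions $P$ and entries $a_{ij}$, a 2-minor of $A$ is a polynomial $a_{ij}a_{kl}-a_{il}a_{kj}$ with $i<k$, $j<l$ and $(i,j),(i,l),(k,j),(k,l)\in P$. $I_2(\mathbf T_{\lambda-\mu})$ and $I_2(\mathbf S_{\lambda-\mu})$ denote the ideals of $K[\mathbf T_{\lambda-\mu}]$ generated by the 2-minors of $\mathbf T_{\lambda-\mu}$ and of $\mathbf S_{\lambda-\mu}$, respectively. *)

From HB Require Import structures.
From mathcomp Require Import all_boot all_order all_algebra.
Set Implicit Arguments. Unset Strict Implicit. Unset Printing Implicit Defensive.
Import GRing.Theory.
Local Open Scope ring_scope.

Section Poly.
Variables (V : finType) (K : fieldType).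

Definition mono := {ffun V -> nat}.
Definition madd (a b : mono) : mono := [ffun v => (a v + b v)%N].
Definition msub (a b : mono) : mono := [ffun v => (a v - b v)%N].
Definition mdiv (a b : mono) : bool := [forall v, (a v <= b v)%N].
Definition mdeg (a : mono) : nat := (\sum_v a v)%N.
Definition evar (x : V) : mono := [ffun v => nat_of_bool (v == x)].

(* a polynomial is its coefficient function; genuine polynomials have finite support *)
Definition polyf := mono -> K.
Definition finsupp (f : polyf) : Prop :=
  exists s : seq mono, forall m, f m != 0 -> m \in s.

(* product: (f*g)(m) = sum over the divisors a of m of f(a) g(m-a) *)
Definition mval (N : nat) (a : {ffun V -> 'I_N}) : mono := [ffun v => val (a v)].
Definition pmul (f g : polyf) : polyf := fun m =>
  \sum_(a : {ffun V -> 'I_(mdeg m).+1} | [forall v, (val (a v) <= m v)%N])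
     f (mval a) * g (msub m (mval a)).

Definition in_ideal (G : polyf -> Prop) (f : polyf) : Prop :=
  exists (r : nat) (gs hs : 'I_r -> polyf),
    (forall i, G (gs i)) /\ (forall i, finsupp (hs i)) /\
    forall m, f m = \sum_(i < r) pmul (hs i) (gs i) m.

Definition is_lead (mlt : mono -> mono -> Prop) (f : polyf) (m : mono) : Prop :=
  f m != 0 /\ forall m', f m' != 0 -> m' = m \/ mlt m' m.

Definition groebner (mlt : mono -> mono -> Prop) (G : polyf -> Prop) : Prop :=
  forall f, in_ideal G f -> (exists m, f m != 0) ->
    exists g mg mf, G g /\ is_lead mlt g mg /\ is_lead mlt f mf /\ mdiv mg mf.

(* lexicographic order induced by a strict variable order vgt (vgt w v : w > v):
   a < b iff at the largest variable where exponents differ, b's is bigger *)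
Definition lexlt (vgt : V -> V -> bool) (a b : mono) : Prop :=
  exists v, (a v < b v)%N /\ forall w, vgt w v -> a w = b w.

Definition minorpoly (a d b c : V) : polyf := fun m =>
  ((m == madd (evar a) (evar d))%:R - (m == madd (evar b) (evar c))%:R).

(* 2-minors of a partially filled array A (None = no position) *)
Definition minors2 (A : nat -> nat -> option V) (g : polyf) : Prop :=
  exists i k j l a d b c,
    (i < k)%N /\ (j < l)%N /\
    A i j = Some a /\ A k l = Some d /\ A i l = Some b /\ A k j = Some c /\
    g = minorpoly a d b c.
End Poly.

(* positions of T_{lambda-mu}: (i,j), 1<=i<=n, mu i < j <= lam i (1-based) *)
Definition Tpos (n : nat) (lam mu : nat -> nat) : seq (nat * nat) :=
  [seq (i, j) | i <- iota 1 n, j <- iota (mu i).+1 (lam i - mu i)].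

Definition TVar (n : nat) (lam mu : nat -> nat) : finType :=
  seq_sub (Tpos n lam mu).

Definition Tarr n lam mu (i j : nat) : option (TVar n lam mu) :=
  insub (i, j).

Definition Sarr n lam mu (i j : nat) : option (TVar n lam mu) :=
  if insub (i, j) is Some v then Some v else insub (j, i).

Definition tvar_gt n lam mu (w v : TVar n lam mu) : bool :=
  ((val w).1 < (val v).1)%N || (((val w).1 == (val v).1) && ((val w).2 < (val v).2)%N).

(* Both ideals are generated by binomials x^p - x^q whose monomials lie in the same
   fibre of a multigrading: row and column counts for T, and the number of
   occurrences of each index, as a row or as a column, for S.  Multiplying such a
   binomial by any polynomial leaves the coefficient sum over every fibre equal to
   zero, so the leading monomial of an ideal element shares its fibre with a smaller
   monomial of its support.  It therefore suffices that every monomial which is not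
   lex-minimal in its fibre be divisible by the leading term of a minor.
   For T, let x be the largest variable at which a smaller monomial of the fibre
   differs from M.  Counting variables in the columns not right of x, and in the
   rows below x whose left boundary mu lies left of x, forces M to contain a
   variable south-east of x that spans a 2-minor of the tableau together with x.
   For S, a monomial divisible by no leading term has each of its row indices at most
   each of its column indices, and on such monomials the S-multidegree determines
   the T-multidegree.  The lex-minimal monomial of an S-fibre is standard, so a
   standard non-minimal M would be non-minimal in its T-fibre, contradicting the
   case of T since T-minors are S-minors. *)

From HB Require Import structures.
From mathcomp Require Import all_boot all_order all_algebra.
From mathcomp Require Import zify.
From Stdlib Require Import Classical.
Set Implicit Arguments. Unset Strict Implicit. Unset Printing Implicit Defensive.
Import GRing.Theory.

Section Monomials.
Variable V : finType.
Implicit Types (a b m p : mono V) (w : V -> nat).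

Lemma mval_inj N : injective (@mval V N).
Proof.
move=> a b E; apply/ffunP => v; apply/val_inj.
by have := congr1 (fun f : mono V => f v) E; rewrite /mval !ffunE.
Qed.

Lemma leq_mdeg m v : (m v <= mdeg m)%N.
Proof. by rewrite /mdeg (bigD1 v) //= leq_addr. Qed.

Lemma mdivP a b : reflect (forall v, a v <= b v)%N (mdiv a b).
Proof. exact: forallP. Qed.

Lemma msubK m p : mdiv p m -> madd (msub m p) p = m.
Proof. by move/mdivP=> H; apply/ffunP=> v; rewrite !ffunE subnK. Qed.

Lemma maddK a p : msub (madd a p) p = a.
Proof. by apply/ffunP=> v; rewrite !ffunE addnK. Qed.

Lemma mdiv_maddl a p : mdiv p (madd a p).
Proof. by apply/mdivP=> v; rewrite ffunE leq_addl. Qed.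

Lemma mdiv_evar2 (x y : V) m :
  x != y -> (0 < m x)%N -> (0 < m y)%N -> mdiv (madd (evar x) (evar y)) m.
Proof.
move=> Hxy Hx Hy; apply/mdivP => v; rewrite !ffunE.
case: (eqVneq v x) => [->|_]; first by rewrite (negbTE Hxy).
by case: (eqVneq v y) => [->|].
Qed.

Definition wdeg w m : nat := (\sum_v w v * m v)%N.

Lemma wdegD w a b : wdeg w (madd a b) = (wdeg w a + wdeg w b)%N.
Proof. by rewrite /wdeg -big_split /=; apply: eq_bigr => v _; rewrite ffunE mulnDr. Qed.

Lemma wdeg_evar w x : wdeg w (evar x) = w x.
Proof.
rewrite /wdeg (bigD1 x) //= big1 ?addn0; first by rewrite ffunE eqxx muln1.
by move=> v Hv; rewrite ffunE (negbTE Hv) muln0.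
Qed.

End Monomials.

Section LexOrder.
Variables (V : finType) (vgt : V -> V -> bool) (rk : V -> nat).
Hypotheses (rk_inj : injective rk) (vgtE : forall w v, vgt w v = (rk w < rk v)%N).
Local Notation lex := (lexlt vgt).

Lemma lexlt_neq (a b : mono V) : lex a b -> b != a.
Proof. by case=> v [H _]; apply/eqP => E; rewrite E ltnn in H. Qed.

Lemma lexlt_trans (a b c : mono V) : lex a b -> lex b c -> lex a c.
Proof.
move=> [v1 [H1 E1]] [v2 [H2 E2]].
case: (ltngtP (rk v1) (rk v2)) => Hr.
- exists v1; split; first by rewrite (E2 v1) ?vgtE in H1.
  by move=> w; rewrite vgtE => Hw; rewrite E1 ?E2 ?vgtE //; exact: ltn_trans Hw Hr.
- exists v2; split; first by rewrite (E1 v2) ?vgtE.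
  by move=> w; rewrite vgtE => Hw; rewrite E1 ?E2 ?vgtE //; exact: ltn_trans Hw Hr.
- have Hv := rk_inj Hr; subst v2; exists v1; split; first exact: ltn_trans H1 H2.
  by move=> w Hw; rewrite E1 ?E2.
Qed.

Lemma lexlt_total (a b : mono V) : a <> b -> lex a b \/ lex b a.
Proof.
move=> Hab.
have /existsP [v0 Hv0] : [exists v, a v != b v].
  by apply: contra_notT Hab => /existsPn H; apply/ffunP => v; apply/eqP/negPn.
case: (@arg_minnP _ v0 (fun v => a v != b v) rk Hv0) => v Hv Hmin.
have E w : vgt w v -> a w = b w.
  rewrite vgtE => Hw; apply/eqP; apply: contraTT Hw => /Hmin.
  by rewrite -leqNgt.
case: (ltngtP (a v) (b v)) => H; [by left; exists v | | by rewrite H eqxx in Hv].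
by right; exists v; split=> // w Hw; rewrite E.
Qed.

Lemma lexlt_maddl (a b c : mono V) : lex a b -> lex (madd c a) (madd c b).
Proof.
move=> [v [H E]]; exists v; split; first by rewrite !ffunE ltn_add2l.
by move=> w Hw; rewrite !ffunE E.
Qed.

Lemma lexlt_evar2 (a d b c : V) : vgt a d -> vgt a b -> vgt a c ->
  lex (madd (evar b) (evar c)) (madd (evar a) (evar d)).
Proof.
rewrite !vgtE => Had Hab Hac; exists a; split.
  have ne x : (rk a < rk x)%N -> (a == x) = false.
    by move=> Hx; apply/eqP => E; rewrite E ltnn in Hx.
  by rewrite !ffunE eqxx (ne b) // (ne c).
move=> w; rewrite vgtE => Hwa; rewrite !ffunE.
have ne x : (rk a <= rk x)%N -> (w == x) = false.
  by move=> Hx; apply/eqP => E; subst x; move: (leq_trans Hwa Hx); rewrite ltnn.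
by rewrite (ne a) // (ne b) ?(ne c) ?(ne d) // ltnW.
Qed.

End LexOrder.

Lemma seq_max (T : eqType) (R : T -> T -> Prop)
    (R_trans : forall a b c, R a b -> R b c -> R a c)
    (R_total : forall a b, a <> b -> R a b \/ R b a) (l : seq T) :
  l != [::] -> exists2 M, M \in l & forall m, m \in l -> m = M \/ R m M.
Proof.
elim: l => // x [|y l] IH _.
  by exists x; rewrite ?mem_seq1 // => m; rewrite mem_seq1 => /eqP ->; left.
have [M HM HMl] := IH isT.
case: (eqVneq x M) => [Hx|/eqP Hne].
  subst M; exists x; rewrite ?mem_head // => m.
  by rewrite in_cons => /orP [/eqP ->|/HMl]; [left|].
case: (R_total _ _ Hne) => H.
- exists M; first by rewrite in_cons HM orbT.
  by move=> m; rewrite in_cons => /orP [/eqP ->|/HMl]; [right|].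
- exists x; first by rewrite mem_head.
  move=> m; rewrite in_cons => /orP [/eqP ->|/HMl [->|H']]; [by left|by right|].
  by right; exact: R_trans H' H.
Qed.

Lemma big_seq_pick (R : pzSemiRingType) (T : eqType) (l : seq T) (F : T -> R) y :
  uniq l -> (\sum_(a <- l) F a * (a == y)%:R = if y \in l then F y else 0)%R.
Proof.
elim: l => [|x l IH]; first by rewrite big_nil.
rewrite big_cons /= in_cons => /andP [Hx Hl]; rewrite IH //.
by case: (eqVneq x y) => [<-|Hxy] /=; rewrite ?(negbTE Hx) ?mulr1 ?addr0 ?mulr0 ?add0r.
Qed.

Lemma sum_ltn (T : finType) (F G : T -> nat) x :
  (forall v, F v <= G v)%N -> (F x < G x)%N -> (\sum_v F v < \sum_v G v)%N.
Proof.
move=> H Hx; rewrite (bigD1 x) //= [X in (_ < X)%N](bigD1 x) //=.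
by rewrite -addSn leq_add // leq_sum.
Qed.

Section Binomials.
Variables (V : finType) (K : fieldType).
Local Open Scope ring_scope.
Implicit Types (h : polyf V K) (a p q m : mono V).

Definition binom p q : polyf V K := fun m => (m == p)%:R - (m == q)%:R.

(* coefficients of the product x^p * h *)
Definition mshift h p : polyf V K := fun m => if mdiv p m then h (msub m p) else 0.

Lemma pmul_mono h p m : pmul h (fun m' => (m' == p)%:R) m = mshift h p m.
Proof.
rewrite /pmul /mshift; case: ifP => Hd.
  pose a0 : {ffun V -> 'I_(mdeg m).+1} := [ffun v => inord (msub m p v)].
  have Ha0 : mval a0 = msub m p.
    apply/ffunP=> v; rewrite /mval !ffunE /= inordK // ltnS.
    exact: leq_trans (leq_subr _ _) (leq_mdeg _ _).
  have Ha0m : [forall v, val (a0 v) <= m v]%N.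
    apply/forallP=> v; have := congr1 (fun f : mono V => f v) Ha0.
    by rewrite /mval ffunE => ->; rewrite ffunE leq_subr.
  have Hmp : msub m (msub m p) = p.
    by apply/ffunP=> v; rewrite !ffunE subKn //; exact: (mdivP _ _ Hd).
  rewrite (bigD1 a0) //= big1 ?addr0; first by rewrite Ha0 Hmp eqxx mulr1.
  move=> a /andP [/forallP Ha Hne].
  case: (eqVneq (msub m (mval a)) p) => [E|]; last by rewrite mulr0.
  case/negP: Hne; apply/eqP/(@mval_inj _ (mdeg m).+1); rewrite Ha0 -E.
  by apply/ffunP=> v; rewrite !ffunE subKn //; exact: Ha.
rewrite big1 // => a _.
case: (eqVneq (msub m (mval a)) p) => [E|]; last by rewrite mulr0.
by case/negP: Hd; rewrite -E; apply/mdivP=> v; rewrite ffunE leq_subr.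
Qed.

Lemma pmul_binom h p q m : pmul h (binom p q) m = mshift h p m - mshift h q m.
Proof.
rewrite -!pmul_mono /pmul /binom -sumrB.
by apply: eq_bigr => a _; rewrite mulrBr.
Qed.

Lemma mshift_sum h s p m : (forall a, h a != 0 -> a \in s) ->
  mshift h p m = \sum_(a <- undup s) h a * (madd a p == m)%:R.
Proof.
move=> Hs; rewrite /mshift; case: ifP => Hd.
  have E a : (madd a p == m) = (a == msub m p).
    by apply/eqP/eqP => [<-|->]; [rewrite maddK | exact: msubK].
  under eq_bigr do rewrite E.
  rewrite big_seq_pick ?undup_uniq // mem_undup.
  by case: ifP => // Hn; apply/eqP; apply: contraFT Hn => /Hs.
rewrite big1 // => a _.
case: (eqVneq (madd a p) m) => [E|]; last by rewrite mulr0.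
by rewrite -E mdiv_maddl in Hd.
Qed.

Lemma finsupp_sum r (F : 'I_r -> polyf V K) :
  (forall i, finsupp (F i)) -> finsupp (fun m => \sum_(i < r) F i m).
Proof.
elim: r F => [|r IH] F HF; first by exists [::] => m; rewrite big_ord0 eqxx.
have [s1 Hs1] := IH (fun i => F (widen_ord (leqnSn r) i)) (fun i => HF _).
have [s2 Hs2] := HF ord_max.
exists (s1 ++ s2) => m; rewrite big_ord_recr /= mem_cat => H.
case: (eqVneq (\sum_(i < r) F (widen_ord (leqnSn r) i) m) 0) => H1.
  by rewrite H1 add0r in H; rewrite Hs2 ?orbT.
by rewrite Hs1.
Qed.

Lemma finsupp_pmul_binom h p q : finsupp h -> finsupp (pmul h (binom p q)).
Proof.
move=> [s Hs]; exists ([seq madd a p | a <- s] ++ [seq madd a q | a <- s]) => m.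
have shift0 r : ~~ (mdiv r m && (h (msub m r) != 0)) -> mshift h r m = 0.
  by rewrite /mshift; case: ifP => //= _; rewrite negbK => /eqP.
rewrite pmul_binom mem_cat => H; apply/orP.
case Ep: (mdiv p m && (h (msub m p) != 0)).
  by left; case/andP: Ep => Hp Hh; rewrite -(msubK Hp); exact: map_f (Hs _ Hh).
case Eq: (mdiv q m && (h (msub m q) != 0)).
  by right; case/andP: Eq => Hq Hh; rewrite -(msubK Hq); exact: map_f (Hs _ Hh).
by move: H; rewrite !shift0 ?Ep ?Eq // subrr eqxx.
Qed.

Section LeadingTerms.
Variable mlt : mono V -> mono V -> Prop.

Lemma is_lead_binom p q : p != q -> mlt q p -> is_lead mlt (binom p q) p.
Proof.
move=> Hpq Hqp; split; first by rewrite /binom eqxx (negbTE Hpq) subr0 oner_eq0.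
move=> m; rewrite /binom.
case: (eqVneq m p) => [->|_]; first by left.
by case: (eqVneq m q) => [->|_]; [right | rewrite subrr eqxx].
Qed.

Lemma binom_lead p q mg : is_lead mlt (binom p q) mg ->
  (mg = p /\ mlt q p) \/ (mg = q /\ mlt p q).
Proof.
rewrite /is_lead /binom => -[H1 H2].
have Hpq : p != q by apply: contraNneq H1 => ->; rewrite subrr.
case: (eqVneq mg p) => [Ep|Hp].
  subst mg; left; split=> //; case: (H2 q) => [|E|//].
    by rewrite [q == p]eq_sym (negbTE Hpq) eqxx sub0r oppr_eq0 oner_eq0.
  by rewrite E eqxx in Hpq.
case: (eqVneq mg q) => [Eq|Hq]; last first.
  by move: H1; rewrite (negbTE Hp) (negbTE Hq) subrr eqxx.
subst mg; right; split=> //; case: (H2 p) => [|E|//].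
  by rewrite (negbTE Hpq) eqxx subr0 oner_eq0.
by rewrite E eqxx in Hpq.
Qed.

Definition in_initial (G : polyf V K -> Prop) m : Prop :=
  exists g mg, G g /\ is_lead mlt g mg /\ mdiv mg m.

Lemma in_initial_sub (G G' : polyf V K -> Prop) m :
  (forall g, G g -> G' g) -> in_initial G m -> in_initial G' m.
Proof. by move=> HG [g [mg [Hg Hl]]]; exists g, mg; split; first exact: HG. Qed.

End LeadingTerms.
End Binomials.

Section Grading.
Variables (V : finType) (K : fieldType) (I : finType) (W : I -> V -> nat).
Local Open Scope ring_scope.
Implicit Types (h : polyf V K) (a p q m M : mono V).

Definition multideg m : {ffun I -> nat} := [ffun i => wdeg (W i) m].

Lemma multideg_maddl a p q :
  multideg p = multideg q -> multideg (madd a p) = multideg (madd a q).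
Proof.
move=> E; apply/ffunP => i; rewrite !ffunE !wdegD.
by have := congr1 (fun d : {ffun I -> nat} => d i) E; rewrite !ffunE => ->.
Qed.

Hypothesis multideg_mdeg : forall m1 m2, multideg m1 = multideg m2 -> mdeg m1 = mdeg m2.

(* exponents bounded by mdeg M suffice, since the grading refines the total degree *)
Definition fibre M : seq (mono V) :=
  [seq mval b | b <- enum [pred b : {ffun V -> 'I_(mdeg M).+1} |
                            multideg (mval b) == multideg M]].

Lemma fibre_uniq M : uniq (fibre M).
Proof. by rewrite map_inj_uniq ?enum_uniq //; exact: mval_inj. Qed.

Lemma mem_fibre M m : (m \in fibre M) = (multideg m == multideg M).
Proof.
apply/idP/idP; first by case/mapP=> b; rewrite mem_enum inE => H ->.
move=> /eqP H.
pose b : {ffun V -> 'I_(mdeg M).+1} := [ffun v => inord (m v)].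
have Hb : mval b = m.
  apply/ffunP=> v; rewrite /mval !ffunE /= inordK // ltnS -(multideg_mdeg H).
  exact: leq_mdeg.
by rewrite -Hb; apply: map_f; rewrite mem_enum inE Hb H.
Qed.

Lemma fibre_sum_mshift h s p M : (forall a, h a != 0 -> a \in s) ->
  \sum_(m <- fibre M) mshift h p m =
  \sum_(a <- undup s) h a * (multideg (madd a p) == multideg M)%:R.
Proof.
move=> Hs; under eq_bigr do rewrite (mshift_sum p _ Hs).
rewrite exchange_big /=; apply: eq_bigr => a _; rewrite -big_distrr /=.
congr (_ * _); under eq_bigr do rewrite eq_sym -[(_ == _)%:R]mul1r.
rewrite (big_seq_pick (fun=> 1)) ?fibre_uniq // mem_fibre.
by case: (_ == _).
Qed.

Lemma fibre_sum_pmul_binom h p q M : finsupp h -> multideg p = multideg q ->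
  \sum_(m <- fibre M) pmul h (binom K p q) m = 0.
Proof.
move=> [s Hs] Hpq; under eq_bigr do rewrite pmul_binom.
rewrite sumrB !(fibre_sum_mshift _ _ Hs).
by under eq_bigr do rewrite (multideg_maddl _ Hpq); rewrite subrr.
Qed.

End Grading.

Section Criterion.
Variables (V : finType) (K : fieldType) (I : finType) (W : I -> V -> nat).
Variables (vgt : V -> V -> bool) (rk : V -> nat).
Hypotheses (rk_inj : injective rk) (vgtE : forall w v, vgt w v = (rk w < rk v)%N).
Variable G : polyf V K -> Prop.
Hypothesis G_binom :
  forall g, G g -> exists p q, g = binom K p q /\ multideg W p = multideg W q.
Local Open Scope ring_scope.
Local Notation lex := (lexlt vgt).
Implicit Types (f : polyf V K) (m M : mono V).

Lemma in_initial_lower m :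
  in_initial lex G m -> exists2 m', multideg W m' = multideg W m & lex m' m.
Proof.
move=> [g [mg [/G_binom [p [q [-> Hpq]]] [Hlead Hdiv]]]].
have [o Ho Hlt] : exists2 o, multideg W o = multideg W mg & lex o mg.
  by case: (binom_lead Hlead) => -[-> Hlt]; [exists q | exists p].
exists (madd (msub m mg) o).
  by rewrite -[X in _ = multideg W X](msubK Hdiv); exact: multideg_maddl.
by rewrite -[X in lex _ X](msubK Hdiv); exact: lexlt_maddl.
Qed.

Lemma in_ideal_finsupp f : in_ideal G f -> finsupp f.
Proof.
move=> [r [gs [hs [HG [Hh Hf]]]]].
have [s Hs] : finsupp (fun m => \sum_(i < r) pmul (hs i) (gs i) m).
  apply: finsupp_sum => i; have [p [q [-> _]]] := G_binom (HG i).
  exact: finsupp_pmul_binom.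
by exists s => m; rewrite Hf; exact: Hs.
Qed.

Hypothesis multideg_mdeg :
  forall m1 m2, multideg W m1 = multideg W m2 -> mdeg m1 = mdeg m2.

Lemma in_ideal_fibre_sum f M : in_ideal G f -> \sum_(m <- fibre W M) f m = 0.
Proof.
move=> [r [gs [hs [HG [Hh Hf]]]]]; under eq_bigr do rewrite Hf.
rewrite exchange_big /= big1 // => i _.
have [p [q [-> Hpq]]] := G_binom (HG i).
exact: (fibre_sum_pmul_binom multideg_mdeg M (Hh i) Hpq).
Qed.

Lemma exists_is_lead f : finsupp f -> (exists m, f m != 0) -> exists M, is_lead lex f M.
Proof.
move=> [s Hs] [m0 Hm0].
have Hl : [seq m <- undup s | f m != 0] != [::].
  apply: contraTneq (_ : m0 \in [seq m <- undup s | f m != 0]) => [->//|].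
  by rewrite mem_filter Hm0 mem_undup Hs.
have [M HM HMl] := seq_max (lexlt_trans rk_inj vgtE) (lexlt_total vgtE) Hl.
exists M; split; first by move: HM; rewrite mem_filter => /andP [].
by move=> m Hm; apply: HMl; rewrite mem_filter Hm mem_undup Hs.
Qed.

Lemma fibre_min_standard M : exists m0,
  [/\ multideg W m0 = multideg W M, ~ in_initial lex G m0
    & forall m, multideg W m = multideg W M -> m = m0 \/ lex m0 m].
Proof.
have HM : M \in fibre W M by rewrite (mem_fibre multideg_mdeg).
have Hne : fibre W M != [::] by apply: contraTneq HM => ->.
have [m0 Hm0 Hmin] := @seq_max _ (fun a b => lex b a)
  (fun a b c Hab Hbc => lexlt_trans rk_inj vgtE Hbc Hab)
  (fun a b Hab => iffLR (or_comm _ _) (lexlt_total vgtE Hab)) _ Hne.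
have Hmin' m : multideg W m = multideg W M -> m = m0 \/ lex m0 m.
  by move=> Hm; apply: Hmin; rewrite (mem_fibre multideg_mdeg) Hm.
rewrite (mem_fibre multideg_mdeg) in Hm0; move/eqP: Hm0 => Hm0.
exists m0; split=> // /in_initial_lower [m1 Hm1 Hlt].
case: (Hmin' m1 (etrans Hm1 Hm0)) => [E|Hlt'].
  by rewrite E in Hlt; case/eqP: (lexlt_neq Hlt).
by case/eqP: (lexlt_neq (lexlt_trans rk_inj vgtE Hlt Hlt')).
Qed.

Theorem binomial_groebner_criterion :
  (forall m' M, multideg W m' = multideg W M -> lex m' M -> in_initial lex G M) ->
  groebner lex G.
Proof.
move=> HG f Hf Hnz.
have [M HfM] := exists_is_lead (in_ideal_finsupp Hf) Hnz.
have [[m' [Hdeg Hm' HM]]|Halone] :=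
  classic (exists m', [/\ multideg W m' = multideg W M, f m' != 0 & m' <> M]).
  have Hlt : lex m' M by case: HfM => _ /(_ m' Hm') [].
  by have [g [mg [Hg [Hlg Hd]]]] := HG m' M Hdeg Hlt; exists g, mg, M.
have : \sum_(m <- fibre W M) f m = f M.
  rewrite (bigD1_seq M) ?fibre_uniq ?(mem_fibre multideg_mdeg) //= big1_seq ?addr0 //.
  move=> m /andP [/eqP Hm]; rewrite (mem_fibre multideg_mdeg) => /eqP Hdeg.
  by apply/eqP/contraT => Hm0; case: Halone; exists m.
by rewrite in_ideal_fibre_sum // => /esym/eqP; case: HfM => /negbTE ->.
Qed.

End Criterion.

Lemma homo_segment (r : rel nat) (f : nat -> nat) n :
  reflexive r -> transitive r ->
  (forall i, (1 <= i)%N -> (i < n)%N -> r (f i) (f i.+1)) ->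
  forall i k, (1 <= i)%N -> (i <= k)%N -> (k <= n)%N -> r (f i) (f k).
Proof.
move=> r_refl r_trans Hf i k Hi; elim: k => [|k IH] Hik Hkn; first by lia.
case: (ltngtP i k.+1) => [Hlt||<-//]; last by lia.
by apply: r_trans (IH _ _) (Hf _ _ _); lia.
Qed.

Section Tableau.
Variables (K : fieldType) (n : nat) (lam mu : nat -> nat).
Hypothesis lam_noninc : forall i, (1 <= i)%N -> (i < n)%N -> (lam i.+1 <= lam i)%N.
Hypothesis mu_nondec : forall i, (1 <= i)%N -> (i < n)%N -> (mu i <= mu i.+1)%N.
Hypothesis mu_ge : forall i, (1 <= i <= n)%N -> (i.-1 <= mu i)%N.
Local Notation V := (TVar n lam mu).
Local Notation Tarr := (@Tarr n lam mu).
Local Notation Sarr := (@Sarr n lam mu).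
Implicit Types (a b v w : V).

Definition trow v : nat := (val v).1.
Definition tcol v : nat := (val v).2.

Lemma tvar_gt_rc w v :
  tvar_gt w v = (trow w < trow v)%N || (trow w == trow v) && (tcol w < tcol v)%N.
Proof. by []. Qed.

Lemma mem_Tpos i j : ((i, j) \in Tpos n lam mu) = (1 <= i <= n) && (mu i < j <= lam i).
Proof.
apply/allpairsPdep/idP => [[x [y [Hx Hy [-> ->]]]]|H].
  by move: Hx Hy; rewrite !mem_iota; lia.
by exists i, j; split=> //; rewrite mem_iota; lia.
Qed.

Lemma TVarP v :
  [/\ (1 <= trow v)%N, (trow v <= n)%N, (mu (trow v) < tcol v)%N & (tcol v <= lam (trow v))%N].
Proof.
have := ssvalP v; rewrite [ssval v]surjective_pairing mem_Tpos.
by rewrite /trow /tcol => /and3P [/andP [? ?] ? ?].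
Qed.

Lemma TVar_inj a b : trow a = trow b -> tcol a = tcol b -> a = b.
Proof.
move=> Hr Hc; apply: val_inj; move: Hr Hc; rewrite /trow /tcol.
by case: (val a) (val b) => ? ? [? ?] /= -> ->.
Qed.

Lemma lam_noninc_seg i k : (1 <= i)%N -> (i <= k)%N -> (k <= n)%N -> (lam k <= lam i)%N.
Proof. exact: (homo_segment (r := geq) leqnn (fun _ _ _ h1 h2 => leq_trans h2 h1)). Qed.

Lemma mu_nondec_seg i k : (1 <= i)%N -> (i <= k)%N -> (k <= n)%N -> (mu i <= mu k)%N.
Proof. exact: (homo_segment (r := leq) leqnn leq_trans). Qed.

Lemma trow_le_tcol v : (trow v <= tcol v)%N.
Proof. have [? ? ? ?] := TVarP v; have := @mu_ge (trow v); lia. Qed.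

Lemma Tarr_rc a : Tarr (trow a) (tcol a) = Some a.
Proof. by rewrite /Tarr /trow /tcol -surjective_pairing valK. Qed.

Lemma TarrP i j a : Tarr i j = Some a -> trow a = i /\ tcol a = j.
Proof. by rewrite /Tarr /trow /tcol; case: insubP => // u _ Hu [<-]; rewrite Hu. Qed.

Lemma Tarr_exists i j : (1 <= i <= n) && (mu i < j <= lam i) ->
  exists a, [/\ Tarr i j = Some a, trow a = i & tcol a = j].
Proof. by rewrite -mem_Tpos => H; exists (Sub (i, j) H); rewrite /Tarr insubT. Qed.

Lemma Sarr_Tarr i j a : Tarr i j = Some a -> Sarr i j = Some a.
Proof. by rewrite /Sarr /Tarr => ->. Qed.

Lemma SarrP i j a : Sarr i j = Some a ->
  (trow a = i /\ tcol a = j) \/ (trow a = j /\ tcol a = i).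
Proof.
rewrite /Sarr; case Hij: (insub (i, j)) => [u|] => [[<-]|]; first by left; exact: TarrP.
by move=> Hji; right; have [] := TarrP Hji.
Qed.

Lemma Sarr_cr a : Sarr (tcol a) (trow a) = Some a.
Proof.
rewrite /Sarr; case: insubP => [u _ Hu|_]; last exact: Tarr_rc.
have [? ?] : trow u = tcol a /\ tcol u = trow a by rewrite /trow /tcol Hu.
congr Some; apply: TVar_inj; have := trow_le_tcol a; have := trow_le_tcol u; lia.
Qed.

Definition tbound : nat := (\max_v (trow v + tcol v)).+1.

Lemma trow_lt_tbound v : (trow v < tbound)%N.
Proof. by rewrite /tbound ltnS; apply: leq_trans (leq_bigmax v); rewrite leq_addr. Qed.

Lemma tcol_lt_tbound v : (tcol v < tbound)%N.
Proof. by rewrite /tbound ltnS; apply: leq_trans (leq_bigmax v); rewrite leq_addl. Qed.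

Definition rank v : nat := (trow v * tbound + tcol v)%N.

Lemma tvar_gtE w v : tvar_gt w v = (rank w < rank v)%N.
Proof.
rewrite tvar_gt_rc /rank.
have := tcol_lt_tbound w; have := tcol_lt_tbound v.
move: (trow w) (tcol w) (trow v) (tcol v) tbound => a b c d B Hd Hb.
apply/idP/idP => [/orP [Hac|/andP [/eqP -> Hbd]]|H]; [nia | by rewrite ltn_add2l |].
case: (ltngtP a c) => Hac; [by [] | nia | subst c].
by rewrite ltn_add2l in H.
Qed.

Lemma rank_inj : injective rank.
Proof.
move=> w v E; have := tvar_gtE w v; have := tvar_gtE v w.
rewrite E ltnn !tvar_gt_rc => H1 H2.
apply: TVar_inj; lia.
Qed.

Definition Tweight (cb : 'I_tbound * bool) v : nat :=
  if cb.2 then trow v == cb.1 else tcol v == cb.1.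
Definition Sweight (c : 'I_tbound) v : nat := ((trow v == c) + (tcol v == c))%N.

Lemma sum_proj (f : V -> nat) (phi : nat -> nat) (m : mono V) : (forall v, f v < tbound)%N ->
  (\sum_v phi (f v) * m v = \sum_(c < tbound) phi c * \sum_v (f v == c) * m v)%N.
Proof.
move=> Hf; under [RHS]eq_bigr do rewrite big_distrr /=.
rewrite exchange_big /=; apply: eq_bigr => v _.
rewrite (bigD1 (Ordinal (Hf v))) //= eqxx mul1n big1 ?addn0 // => c Hc.
suff -> : (f v == c) = false by rewrite mul0n muln0.
by apply: contraNF Hc => /eqP E; apply/eqP/val_inj; rewrite /= E.
Qed.

Lemma multidegT_row (m1 m2 : mono V) (phi : nat -> nat) :
  multideg Tweight m1 = multideg Tweight m2 ->
  (\sum_v phi (trow v) * m1 v = \sum_v phi (trow v) * m2 v)%N.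
Proof.
move=> E; rewrite !(sum_proj _ _ trow_lt_tbound); apply: eq_bigr => c _.
by have := congr1 (fun d : {ffun _ -> nat} => d (c, true)) E; rewrite !ffunE /wdeg /= => ->.
Qed.

Lemma multidegT_col (m1 m2 : mono V) (phi : nat -> nat) :
  multideg Tweight m1 = multideg Tweight m2 ->
  (\sum_v phi (tcol v) * m1 v = \sum_v phi (tcol v) * m2 v)%N.
Proof.
move=> E; rewrite !(sum_proj _ _ tcol_lt_tbound); apply: eq_bigr => c _.
by have := congr1 (fun d : {ffun _ -> nat} => d (c, false)) E; rewrite !ffunE /wdeg /= => ->.
Qed.

Lemma multidegS_sum (m1 m2 : mono V) (phi : nat -> nat) :
  multideg Sweight m1 = multideg Sweight m2 ->
  (\sum_v (phi (trow v) + phi (tcol v)) * m1 v =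
   \sum_v (phi (trow v) + phi (tcol v)) * m2 v)%N.
Proof.
have E (m : mono V) : (\sum_v (phi (trow v) + phi (tcol v)) * m v =
                       \sum_(c < tbound) phi c * wdeg (Sweight c) m)%N.
  under eq_bigr do rewrite mulnDl; rewrite big_split /=.
  rewrite (sum_proj _ _ trow_lt_tbound) (sum_proj _ _ tcol_lt_tbound) -big_split /=.
  apply: eq_bigr => c _; rewrite -mulnDr /wdeg -big_split /=.
  by congr (_ * _)%N; apply: eq_bigr => v _; rewrite mulnDl.
move=> Hm; rewrite !E; apply: eq_bigr => c _.
by have := congr1 (fun d : {ffun _ -> nat} => d c) Hm; rewrite !ffunE => ->.
Qed.

Lemma multidegT_mdeg (m1 m2 : mono V) :
  multideg Tweight m1 = multideg Tweight m2 -> mdeg m1 = mdeg m2.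
Proof.
move/(multidegT_row (fun=> 1%N)); rewrite /mdeg.
by under eq_bigr do rewrite mul1n; under [RHS]eq_bigr do rewrite mul1n.
Qed.

Lemma multidegS_mdeg (m1 m2 : mono V) :
  multideg Sweight m1 = multideg Sweight m2 -> mdeg m1 = mdeg m2.
Proof.
move/(multidegS_sum (fun=> 1%N)); rewrite /mdeg.
under eq_bigr do rewrite mulnC; under [RHS]eq_bigr do rewrite mulnC.
by rewrite -!big_distrl /= => /eqP; rewrite eqn_mul2r /= => /eqP.
Qed.

Local Notation lex := (lexlt (@tvar_gt n lam mu)).
Local Notation Tminors := (minors2 (K := K) Tarr).
Local Notation Sminors := (minors2 (K := K) Sarr).

Lemma minorT_binom g : Tminors g ->
  exists p q, g = binom K p q /\ multideg Tweight p = multideg Tweight q.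
Proof.
move=> [i [k [j [l [a [d [b [c [_ [_ [Ha [Hd [Hb [Hc ->]]]]]]]]]]]]]].
exists (madd (evar a) (evar d)), (madd (evar b) (evar c)); split=> //.
have [? ?] := TarrP Ha; have [? ?] := TarrP Hd.
have [? ?] := TarrP Hb; have [? ?] := TarrP Hc.
by apply/ffunP => -[z []]; rewrite !ffunE !wdegD !wdeg_evar /Tweight /=; lia.
Qed.

Lemma minorS_binom g : Sminors g ->
  exists p q, g = binom K p q /\ multideg Sweight p = multideg Sweight q.
Proof.
move=> [i [k [j [l [a [d [b [c [_ [_ [Ha [Hd [Hb [Hc ->]]]]]]]]]]]]]].
exists (madd (evar a) (evar d)), (madd (evar b) (evar c)); split=> //.
apply/ffunP => z; rewrite !ffunE !wdegD !wdeg_evar /Sweight.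
by case/SarrP: Ha => -[-> ->]; case/SarrP: Hd => -[-> ->];
   case/SarrP: Hb => -[-> ->]; case/SarrP: Hc => -[-> ->]; lia.
Qed.

Lemma minorT_minorS g : Tminors g -> Sminors g.
Proof.
move=> [i [k [j [l [a [d [b [c [? [? [Ha [Hd [Hb [Hc ->]]]]]]]]]]]]]].
by exists i, k, j, l, a, d, b, c; do !split=> //; exact: Sarr_Tarr.
Qed.

Lemma in_initial_minor (A : nat -> nat -> option V) i k j l a d b c (M : mono V) :
  (i < k)%N -> (j < l)%N ->
  A i j = Some a -> A k l = Some d -> A i l = Some b -> A k j = Some c ->
  tvar_gt a d -> tvar_gt a b -> tvar_gt a c -> (0 < M a)%N -> (0 < M d)%N ->
  in_initial lex (minors2 (K := K) A) M.
Proof.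
move=> Hik Hjl Ha Hd Hb Hc Had Hab Hac HMa HMd.
have Hlt := lexlt_evar2 tvar_gtE Had Hab Hac.
exists (minorpoly K a d b c), (madd (evar a) (evar d)); split; last split.
- by exists i, k, j, l, a, d, b, c.
- exact: is_lead_binom (lexlt_neq Hlt) Hlt.
- apply: mdiv_evar2 => //; apply: contraTneq Had => ->.
  by rewrite tvar_gtE ltnn.
Qed.

Lemma exists_Tcorner (m' M : mono V) x :
  multideg Tweight m' = multideg Tweight M -> (m' x < M x)%N ->
  (forall w, tvar_gt w x -> m' w = M w) ->
  exists v, [/\ (0 < M v)%N, (trow x < trow v)%N, (tcol x < tcol v)%N
              & (mu (trow v) < tcol x)%N].
Proof.
move=> Hdeg Hx Habove; apply: NNPP => Hn.
(* w1 and w2 have the same totals on m' and on M; without a corner, m' would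
   dominate M pointwise in the combination below, strictly at x *)
pose w1 v : nat := (tcol v <= tcol x)%N.
pose w2 v : nat := (trow x < trow v)%N && (mu (trow v) < tcol x)%N.
have E1 := multidegT_col (fun c => nat_of_bool (c <= tcol x)%N) Hdeg.
have E2 := multidegT_row (fun r => nat_of_bool ((trow x < r) && (mu r < tcol x))%N) Hdeg.
have Hxpt : (w1 x * m' x + w2 x * M x < w1 x * M x + w2 x * m' x)%N.
  by rewrite /w1 /w2 leqnn ltnn /= !mul1n !mul0n !addn0.
have Hpt v : (w1 v * m' v + w2 v * M v <= w1 v * M v + w2 v * m' v)%N.
  case: (eqVneq v x) => [->|Hvx]; first exact: ltnW.
  case Hgt: (tvar_gt v x); first by rewrite Habove.
  have [_ _ Hmu _] := TVarP v.
  have Hne : (trow v != trow x) || (tcol v != tcol x).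
    by rewrite -negb_and; apply: contraNN Hvx => /andP [/eqP ? /eqP ?]; apply/eqP/TVar_inj.
  rewrite tvar_gt_rc in Hgt.
  rewrite /w1 /w2; have [Hc|Hc] := leqP (tcol v) (tcol x).
    have Hr : (trow x < trow v)%N by lia.
    by rewrite Hr (leq_trans Hmu Hc) addnC.
  rewrite mul0n !add0n; case: (boolP (_ && _)) => [/andP [Hr Hmux]|_].
    suff -> : M v = 0%N by [].
    by apply/eqP; rewrite -leqn0 leqNgt; apply/negP => HM; apply: Hn; exists v.
  by rewrite !mul0n.
have := sum_ltn Hpt Hxpt.
by rewrite !big_split /= E1 E2 ltnn.
Qed.

Lemma in_initialT_of_lexlt (m' M : mono V) :
  multideg Tweight m' = multideg Tweight M -> lex m' M -> in_initial lex Tminors M.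
Proof.
move=> Hdeg [x [Hx Habove]].
have [v [HMv Hrow Hcol Hmu]] := exists_Tcorner Hdeg Hx Habove.
have [? ? ? ?] := TVarP x; have [? ? ? ?] := TVarP v.
have Hlam : (lam (trow v) <= lam (trow x))%N by apply: lam_noninc_seg; lia.
have [b [Hb ? ?]] := @Tarr_exists (trow x) (tcol v) ltac:(lia).
have [c [Hc ? ?]] := @Tarr_exists (trow v) (tcol x) ltac:(lia).
have HMx : (0 < M x)%N := leq_ltn_trans (leq0n _) Hx.
apply: (in_initial_minor Hrow Hcol (Tarr_rc x) (Tarr_rc v) Hb Hc _ _ _ HMx HMv);
  rewrite tvar_gt_rc; lia.
Qed.

Definition rows_below_cols (m : mono V) : Prop :=
  forall u v, (0 < m u)%N -> (0 < m v)%N -> (trow v <= tcol u)%N.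

Lemma rows_below_cols_standard (m : mono V) :
  ~ in_initial lex Sminors m -> rows_below_cols m.
Proof.
move=> Hstd u v Hu Hv; rewrite leqNgt; apply/negP => Hlt; apply: Hstd.
have [? ? ? ?] := TVarP u; have [? ? ? ?] := TVarP v.
have := trow_le_tcol u; have := trow_le_tcol v => ? ?.
have ? : (mu (tcol u) <= mu (trow v))%N by apply: mu_nondec_seg; lia.
have ? : (lam (trow v) <= lam (tcol u))%N by apply: lam_noninc_seg; lia.
have ? : (lam (trow v) <= lam (trow u))%N by apply: lam_noninc_seg; lia.
have [b [Hb ? ?]] := @Tarr_exists (tcol u) (tcol v) ltac:(lia).
have [c [Hc Hcr Hcc]] := @Tarr_exists (trow u) (trow v) ltac:(lia).
have Hc' : Sarr (trow v) (trow u) = Some c by rewrite -Hcr -Hcc Sarr_cr.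
apply: (in_initial_minor _ _ (Sarr_cr u) (Sarr_Tarr (Tarr_rc v)) (Sarr_Tarr Hb) Hc'
          _ _ _ Hu Hv); rewrite ?tvar_gt_rc; lia.
Qed.

Definition rows_upto (m : mono V) s : nat := (\sum_v (trow v <= s) * m v)%N.
Definition cols_upto (m : mono V) s : nat := (\sum_v (tcol v <= s) * m v)%N.

(* either every row index of m is at most s, or no column index is *)
Lemma rows_upto_minn (m : mono V) s : rows_below_cols m ->
  rows_upto m s = minn (mdeg m) (rows_upto m s + cols_upto m s).
Proof.
move=> Hm.
have [[u [Hu Hus]]|Hn] := classic (exists u, (0 < m u)%N /\ (tcol u <= s)%N).
  have -> : rows_upto m s = mdeg m.
    apply: eq_bigr => v _; case: (posnP (m v)) => [->|Hv]; first by rewrite muln0.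
    by rewrite (leq_trans (Hm u v Hu Hv) Hus) mul1n.
  by apply/esym/minn_idPl; rewrite leq_addr.
have -> : cols_upto m s = 0%N.
  apply: big1 => v _; case: (posnP (m v)) => [->|Hv]; first by rewrite muln0.
  by case: leqP => // Hvs; case: Hn; exists v.
rewrite addn0; apply/esym/minn_idPr; apply: leq_sum => v _.
by case: (trow v <= s)%N; rewrite ?mul1n ?mul0n.
Qed.

Lemma multidegT_of_multidegS (m1 m2 : mono V) :
  multideg Sweight m1 = multideg Sweight m2 ->
  rows_below_cols m1 -> rows_below_cols m2 ->
  multideg Tweight m1 = multideg Tweight m2.
Proof.
move=> Hdeg H1 H2.
have Eupto s : rows_upto m1 s = rows_upto m2 s.
  rewrite (rows_upto_minn s H1) (rows_upto_minn s H2) (multidegS_mdeg Hdeg).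
  congr minn; rewrite /rows_upto /cols_upto -!big_split /=.
  under eq_bigr do rewrite -mulnDl; under [RHS]eq_bigr do rewrite -mulnDl.
  exact: (multidegS_sum (fun c => nat_of_bool (c <= s)%N) Hdeg).
have Erow c : (\sum_v (trow v == c) * m1 v = \sum_v (trow v == c) * m2 v)%N.
  have split_upto (m : mono V) :
      (\sum_v (trow v == c) * m v + rows_upto m c.-1 = rows_upto m c)%N.
    rewrite /rows_upto -big_split /=; apply: eq_bigr => v _; rewrite -mulnDl.
    by have [? _ _ _] := TVarP v; congr (_ * _)%N; case: (ltngtP (trow v) c); lia.
  by apply/eqP; rewrite -(eqn_add2r (rows_upto m1 c.-1)) {2}Eupto !split_upto Eupto.
apply/ffunP => -[c []]; rewrite !ffunE /wdeg /Tweight /=; first exact: Erow.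
have := congr1 (fun d : {ffun _ -> nat} => d c) Hdeg; rewrite !ffunE /wdeg /Sweight.
under eq_bigr do rewrite mulnDl; under [RHS]eq_bigr do rewrite mulnDl.
by rewrite !big_split /= Erow => /eqP; rewrite eqn_add2l => /eqP.
Qed.

Lemma in_initialS_of_lexlt (m' M : mono V) :
  multideg Sweight m' = multideg Sweight M -> lex m' M -> in_initial lex Sminors M.
Proof.
move=> Hdeg Hlt; apply: NNPP => HM.
have [m0 [Hm0 Hstd0 Hmin]] :=
  fibre_min_standard rank_inj tvar_gtE minorS_binom multidegS_mdeg M.
have Hlt0 : lex m0 M.
  by case: (Hmin m' Hdeg) => [<-|Hlt'] //; exact: (lexlt_trans rank_inj tvar_gtE Hlt' Hlt).
have HT := multidegT_of_multidegS Hm0 (rows_below_cols_standard Hstd0)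
                                     (rows_below_cols_standard HM).
exact/HM/(in_initial_sub minorT_minorS)/(in_initialT_of_lexlt HT Hlt0).
Qed.

End Tableau.

Theorem theorem2p4 (K : fieldType) (n : nat) (lam mu : nat -> nat) :
  (1 <= n)%N ->
  (forall i, (1 <= i <= n)%N -> (0 < lam i)%N) ->
  (forall i, (1 <= i)%N -> (i < n)%N -> (lam i.+1 <= lam i)%N) ->
  (forall i, (1 <= i)%N -> (i < n)%N -> (mu i <= mu i.+1)%N) ->
  (mu n < lam n)%N ->
  (forall i, (1 <= i <= n)%N -> (i.-1 <= mu i)%N) ->
  groebner (K := K) (lexlt (@tvar_gt n lam mu)) (minors2 (@Tarr n lam mu))
  /\ groebner (K := K) (lexlt (@tvar_gt n lam mu)) (minors2 (@Sarr n lam mu)).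
Proof.
(* n >= 1, lam > 0 and mu n < lam n only rule out degenerate shapes. *)
move=> _ _ lam_noninc mu_nondec _ mu_ge.
have rk_inj := @rank_inj n lam mu; have vgtE := @tvar_gtE n lam mu.
split.
- apply: (binomial_groebner_criterion rk_inj vgtE (@minorT_binom K n lam mu)).
    exact: multidegT_mdeg.
  exact: (in_initialT_of_lexlt K lam_noninc).
- apply: (binomial_groebner_criterion rk_inj vgtE (@minorS_binom K n lam mu)).
    exact: multidegS_mdeg.
  exact: (in_initialS_of_lexlt K lam_noninc mu_nondec mu_ge).
Qed.
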